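(* Let $n\ge 2$, $t\ge 2$, let $V$ be a $2n$-dimensional $\mathbb{F}_{q^t}$-vector space with $V=U_1\oplus U_2$, $\dim U_1=\dim U_2=n$, and put $T_1=PG(U_1,\mathbb{F}_{q^t})$, $T_2=PG(U_2,\mathbb{F}_{q^t})$ (two disjoint $(n-1)$-dimensional subspaces of $\Lambda=PG(V,\mathbb{F}_{q^t})=PG(2n-1,q^t)$). Let $f:U_1\to U_2$ be an invertible semilinear map with companion automorphism $\sigma\in\mathrm{Aut}(\mathbb{F}_{q^t})$ such that $\mathrm{Fix}(\sigma)=\mathbb{F}_q$, and let $\Phi_f:T_1\to T_2$ be the induced collineation, $\langle\mathbf u\rangle_{q^t}\mapsto\langle f(\mathbf u)\rangle_{q^t}$. Then for every $\rho\in\mathbb{F}_{q^t}^*$ the set $$L_{\rho,f}=\{\langle \mathbf u+\rho f(\mathbf u)\rangle_{q^t}:\mathbf u\in U_1\setminus\{\mathbf 0\}\},$$ which is the $\mathbb{F}_q$-linear set defined by the $\mathbb{F}_q$-subspace $W_{\rho,f}=\{\mathbf u+\rho f(\mathbf u):\mathbf u\in U_1\}$ (of $\mathbb{F}_q$-dimension $tn$), is an $\mathbb{F}_q$-linear set of $\Lambda$ of pseudoregulus type, whose associated pseudoregulus is $\{\langle P,P^{\Phi_f}\rangle_{q^t}:P\in T_1\}$ and whose transversal spaces are $T_1$ and $T_2$.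
   Context: A map $f:U_1\to U_2$ between $\mathbb{F}_{q^t}$-spaces is semilinear with companion automorphism $\sigma$ if it is additive and $f(\lambda\mathbf u)=\lambda^\sigma f(\mathbf u)$ for all $\lambda\in\mathbb{F}_{q^t}$. For an $\mathbb{F}_q$-subspace $U$ of $V$, $L_U=\{\langle \mathbf u\rangle_{q^t}:\mathbf u\in U\setminus\{\mathbf 0\}\}$ is the $\mathbb{F}_q$-linear set defined by $U$, of rank $\dim_{\mathbb{F}_q}U$; the weight of a subspace $PG(W,\mathbb{F}_{q^t})$ in $L_U$ is $\dim_{\mathbb{F}_q}(W\cap U)$; $L_U$ is scattered if every point has weight 1. Definition (pseudoregulus type): for integers $t,n\ge 2$, a scattered $\mathbb{F}_q$-linear set $L=L_U$ of $\Lambda=PG(2n-1,q^t)$ of rank $tn$ is of pseudoregulus type if (i) there exist $m=(q^{nt}-1)/(q^t-1)$ pairwise disjoint lines $s_1,\dots,s_m$ of $\Lambda$ each having weight $t$ in $L$, and (ii) there exist exactly two $(n-1)$-dimensional subspaces $T_1,T_2$ of $\Lambda$ disjoint from $L$ such that $T_j\cap s_i\neq\emptyset$ for all $i,j$. The set $\{s_1,\dots,s_m\}$ is called the pseudoregulus associated with $L$, and $T_1,T_2$ its transversal spaces. *)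

From HB Require Import structures.
From mathcomp Require Import all_boot all_order all_algebra all_field.
Unset Printing Implicit Defensive.
Import GRing.Theory.
Local Open Scope ring_scope.

Section Defs.
Context {L : finFieldType} {N : nat}.
Local Notation V := 'rV[L]_N.

Definition Fq (q : nat) : {set L} := [set x : L | x ^+ q == x].

Definition Fq_comb (q : nat) (s : seq V) (v : V) : Prop :=
  exists c : seq L, [/\ size c = size s, all (fun x => x \in Fq q) c &
    v = \sum_(i < size s) c`_i *: s`_i].

Definition Fq_free (q : nat) (s : seq V) : Prop :=
  forall c : seq L, size c = size s -> all (fun x => x \in Fq q) c ->
    \sum_(i < size s) c`_i *: s`_i = 0 -> forall i, c`_i = 0.

Definition Fq_dim (q : nat) (S : {set V}) (d : nat) : Prop :=
  exists s : seq V, [/\ size s = d, all (fun v => v \in S) s, Fq_free q s &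
    forall v, v \in S <-> Fq_comb q s v].

Definition vset (W : {vspace V}) : {set V} := [set v : V | v \in W].

Definition weight (q : nat) (U : {set V}) (W : {vspace V}) (w : nat) : Prop :=
  Fq_dim q (U :&: vset W) w.

Definition scattered (q : nat) (U : {set V}) : Prop :=
  forall u, u \in U -> u != 0 -> weight q U <[u]>%VS 1.

Definition disjoint_from_LU (U : {set V}) (T : {vspace V}) : Prop :=
  forall u, u \in U -> u != 0 -> ~~ (<[u]> <= T)%VS.

Definition pr_size (q t n : nat) : nat := ((q ^ (n * t) - 1) %/ (q ^ t - 1))%N.

Definition is_pseudoregulus (q t n : nat) (U : {set V})
    (s : 'I_(pr_size q t n) -> {vspace V}) (T1 T2 : {vspace V}) : Prop :=
  [/\ forall i, \dim (s i) = 2%N,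
      forall i j, i != j -> (s i :&: s j)%VS = 0%VS,
      forall i, weight q U (s i) t,
      T1 != T2 &
      forall T : {vspace V},
        (\dim T = n /\ disjoint_from_LU U T /\ forall i, (T :&: s i)%VS != 0%VS)
        <-> (T = T1 \/ T = T2)].

Definition pseudoregulus_type (q t n : nat) (U : {set V}) : Prop :=
  [/\ Fq_dim q U (t * n)%N, scattered q U &
      exists s T1 T2, is_pseudoregulus q t n U s T1 T2].

End Defs.

From HB Require Import structures.
From mathcomp Require Import all_boot all_order all_algebra all_field.
From mathcomp Require Import zify.
From Stdlib Require Import Classical.
Import GRing.Theory.
Local Open Scope ring_scope.

(* The map gamma : u |-> u + rho f(u) then carries an F_q-basis of
   U1 (resp. of <u>) onto one of W (resp. of W meeting the line <u, f(u)>),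
   giving rank tn and weight t; a point of W on <gamma u> is a sigma-fixed
   multiple of gamma u, giving scatteredness.  The lines <u, f(u)> are
   indexed by the points of PG(U1), counted by partitioning U1 \ {0} into
   classes of #|L| - 1 proportional vectors.  Finally an n-space T meeting
   all these lines is U1 or U2: if T misses U2 (resp. U1), T meets each line
   in u + c_u f(u) (resp. f(u) + d_u u), and linearity of T against the
   semilinearity of f forces c_u = 0 (resp. d_u = 0) because sigma is not the
   identity; T meeting both U1 and U2 is impossible by a dimension count. *)

Lemma vline_scale (L : fieldType) (V : vectType L) (k : L) (x : V) :
  k != 0 -> <[k *: x]>%VS = <[x]>%VS.
Proof.
move=> k0; apply/eqP; rewrite eqEdim !dim_vline scaler_eq0 (negbTE k0) leqnn andbT.
by rewrite -memvE memvZ // memv_line.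
Qed.

Lemma vline_eqP (L : fieldType) (V : vectType L) (x y : V) : x != 0 -> y != 0 ->
  reflect (exists2 k, k != 0 & y = k *: x) (<[x]>%VS == <[y]>%VS).
Proof.
move=> x0 y0; apply: (iffP eqP) => [eq_xy | [k k0 ->]]; last by rewrite vline_scale.
have /vlineP [k y_eq] : y \in <[x]>%VS by rewrite eq_xy memv_line.
by exists k => //; apply: contraNneq y0 => k0; rewrite y_eq k0 scale0r.
Qed.
Arguments vline_eqP {L V x y}.

Lemma coord2_uniq (L : fieldType) (V : vectType L) (u v : V) (a b a' b' : L) :
  u != 0 -> v \notin <[u]>%VS -> a *: u + b *: v = a' *: u + b' *: v ->
  a = a' /\ b = b'.
Proof.
move=> u0 v_notin eq_ab.
have sum0 : (a - a') *: u + (b - b') *: v = 0.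
  by rewrite !scalerBl addrACA -opprD eq_ab subrr.
have eq_b : b - b' = 0.
  apply/eqP; apply: contraNT v_notin => b_neq; apply/vlineP.
  exists (- ((a - a') / (b - b'))); apply: (scalerI b_neq).
  rewrite scalerA mulrN [(b - b') * _]mulrC divfK // scaleNr.
  by apply/eqP; rewrite -addr_eq0 addrC sum0.
move: sum0; rewrite eq_b scale0r addr0 => /eqP; rewrite scaler_eq0 (negbTE u0) orbF.
by move=> /eqP /subr0_eq ->; move/subr0_eq: eq_b ->.
Qed.
Arguments coord2_uniq {L V u v a b a' b'}.

Lemma off_line_neq0 (L : fieldType) (V : vectType L) (u v : V) (k : L) :
  u != 0 -> v \notin <[u]>%VS -> u + k *: v != 0.
Proof.
move=> u0 v_notin; apply/eqP => sum0.
have [] := coord2_uniq (a := 1) (b := k) (a' := 0) (b' := 0) u0 v_notin.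
  by rewrite scale1r sum0 !scale0r addr0.
by move=> /eqP; rewrite oner_eq0.
Qed.
Arguments off_line_neq0 {L V u v} k.

Lemma directv_add_uniq (L : fieldType) (V : vectType L) (U1 U2 : {vspace V})
    (a1 a2 b1 b2 : V) :
  directv (U1 + U2) -> a1 \in U1 -> b1 \in U1 -> a2 \in U2 -> b2 \in U2 ->
  a1 + a2 = b1 + b2 -> a1 = b1 /\ a2 = b2.
Proof.
move=> /directv_addP capU a1U b1U a2U b2U eq_ab.
have : a1 - b1 \in (U1 :&: U2)%VS.
  rewrite memv_cap (memvB a1U b1U) /=.
  have -> : a1 - b1 = b2 - a2.
    by rewrite -[a1](addrK a2) eq_ab addrAC [b1 + b2]addrC addrK.
  exact: memvB.
rewrite capU memv0 subr_eq0 => /eqP eq_a1; split => //.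
by move: eq_ab; rewrite eq_a1 => /addrI.
Qed.
Arguments directv_add_uniq {L V U1 U2 a1 a2 b1 b2}.

Lemma cap0_translate (L : fieldType) (V : vectType L) (T X : {vspace V})
    (x y y' : V) :
  (T :&: X = 0)%VS -> x + y \in T -> x + y' \in T -> y \in X -> y' \in X ->
  y = y'.
Proof.
move=> capTX yT y'T yX y'X; apply/eqP; rewrite -subr_eq0 -memv0 -capTX memv_cap.
apply/andP; split; last exact: memvB.
have -> : y - y' = (x + y) - (x + y') by rewrite opprD addrACA subrr add0r.
exact: memvB.
Qed.
Arguments cap0_translate {L V T X x y y'}.

Lemma capv_neq0 (L : fieldType) (V : vectType L) (A B : {vspace V}) (y : V) :
  y \in A -> y \in B -> y != 0 -> (A :&: B)%VS != 0%VS.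
Proof.
move=> yA yB; apply: contraNneq => capAB0.
by rewrite -memv0 -capAB0 memv_cap yA yB.
Qed.
Arguments capv_neq0 {L V A B y}.

Lemma eq_vspace_dim (L : fieldType) (V : vectType L) (T U : {vspace V}) :
  \dim T = \dim U -> (forall u, u \in U -> u != 0 -> u \in T) -> T = U.
Proof.
move=> dimTU sub_UT; apply/eqP; rewrite eq_sym eqEdim dimTU leqnn andbT.
apply/subvP => u uU; have [->|u0] := eqVneq u 0; [exact: mem0v | exact: sub_UT].
Qed.

Section FixedSubfield.
Variables (L : fieldType) (sigma : {rmorphism L -> L}).

Definition fixed (x : L) : bool := sigma x == x.

Lemma fixed0 : fixed 0. Proof. by rewrite /fixed rmorph0. Qed.
Lemma fixed1 : fixed 1. Proof. by rewrite /fixed rmorph1. Qed.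
Lemma fixedD x y : fixed x -> fixed y -> fixed (x + y).
Proof. by rewrite /fixed rmorphD => /eqP-> /eqP->. Qed.
Lemma fixedN x : fixed x -> fixed (- x).
Proof. by rewrite /fixed rmorphN => /eqP->. Qed.
Lemma fixedM x y : fixed x -> fixed y -> fixed (x * y).
Proof. by rewrite /fixed rmorphM => /eqP-> /eqP->. Qed.
Lemma fixedV x : fixed x -> fixed x^-1.
Proof. by rewrite /fixed fmorphV => /eqP->. Qed.

End FixedSubfield.
Arguments fixed {L} sigma x.

Section FixedBases.
Variables (L : fieldType) (sigma : {rmorphism L -> L}) (V : vectType L).
Local Notation fixed := (fixed sigma).

Definition fixed_coefs (c : nat -> L) : Prop := forall i, fixed (c i).

Definition lcomb (c : nat -> L) (s : seq V) : V := \sum_(i < size s) c i *: s`_i.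

Definition fcomb (s : seq V) (v : V) : Prop :=
  exists2 c, fixed_coefs c & v = lcomb c s.

Definition ffree (s : seq V) : Prop := forall c, fixed_coefs c ->
  lcomb c s = 0 -> forall i, (i < size s)%N -> c i = 0.

Definition fbasis (s : seq V) (S : V -> Prop) : Prop :=
  ffree s /\ forall v, S v <-> fcomb s v.

Lemma ffree_cons s v : ffree s -> ~ fcomb s v -> ffree (v :: s).
Proof.
move=> free_s not_comb c Fc; rewrite /lcomb big_ord_recl => sum0.
have [c0|c0] := eqVneq (c 0%N) 0.
  rewrite c0 scale0r add0r in sum0.
  move=> [|i] //= lt_i; apply: (free_s (fun i => c i.+1)) => //.
exfalso; apply: not_comb; exists (fun i => - c i.+1 / c 0%N).
  by move=> i; apply: fixedM; [apply: fixedN | apply: fixedV].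
apply: (scalerI c0); rewrite scaler_sumr.
have -> : c 0%N *: v = - \sum_(i < size s) c (lift ord0 i) *: s`_i.
  by apply/eqP; rewrite -addr_eq0 sum0.
rewrite -sumrN; apply: eq_bigr => i _; rewrite lift0 /= scalerA.
by rewrite mulrCA divff // mulr1 scaleNr.
Qed.

Lemma ffree_uniq s : ffree s -> uniq s.
Proof.
move=> free_s; apply/negbNE/negP => /(uniqPn 0) [i [j [lt_ij lt_j eq_ij]]].
have lt_i : (i < size s)%N by apply: ltn_trans lt_j.
pose c k : L := if k == i then 1 else if k == j then -1 else 0.
have Fc : fixed_coefs c.
  move=> k; rewrite /c; case: ifP => _; first exact: fixed1.
  by case: ifP => _; [apply/fixedN/fixed1 | apply: fixed0].
suff sum0 : lcomb c s = 0.
  by have := free_s c Fc sum0 i lt_i; rewrite /c eqxx => /eqP; rewrite oner_eq0.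
rewrite /lcomb (bigD1 (Ordinal lt_i)) //= (bigD1 (Ordinal lt_j)) /=; last first.
  by apply/eqP => -[] /eqP; rewrite gtn_eqF.
rewrite big1 ?addr0; last first.
  move=> k /andP [ki kj]; rewrite /c.
  by rewrite -[k == i :> nat]/(k == Ordinal lt_i) (negbTE ki)
    -[k == j :> nat]/(k == Ordinal lt_j) (negbTE kj) scale0r.
by rewrite /c eqxx (gtn_eqF lt_ij) eqxx eq_ij scale1r scaleN1r subrr.
Qed.


Lemma fcomb_nth s i : (i < size s)%N -> fcomb s s`_i.
Proof.
move=> lt_i; exists (fun k => (k == i)%:R).
  by move=> k; case: (k == i); [apply: fixed1 | apply: fixed0].
rewrite /lcomb (bigD1 (Ordinal lt_i)) //= eqxx scale1r big1 ?addr0 // => k ki.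
by rewrite -[k == i :> nat]/(k == Ordinal lt_i) (negbTE ki) scale0r.
Qed.

Lemma fbasis_ext s (S S' : V -> Prop) :
  (forall v, S v <-> S' v) -> fbasis s S -> fbasis s S'.
Proof. by move=> eqS [free_s span_s]; split => // v; rewrite -eqS. Qed.

Lemma lcomb_cat (c : nat -> L) s1 s2 :
  lcomb c (s1 ++ s2) = lcomb c s1 + lcomb (fun i => c (size s1 + i)%N) s2.
Proof.
rewrite /lcomb size_cat big_split_ord; congr (_ + _); apply: eq_bigr => i _.
  by rewrite nth_cat /= ltn_ord.
by rewrite nth_cat ltnNge leq_addr /= addKn.
Qed.

Lemma fbasis_single x (S : V -> Prop) : x != 0 ->
  (forall v, S v <-> exists2 k, fixed k & v = k *: x) -> fbasis [:: x] S.
Proof.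
move=> x0 S_eq; split.
  move=> c _; rewrite /lcomb big_ord1 => /eqP; rewrite scaler_eq0 (negbTE x0) orbF.
  by move=> /eqP c0 [|].
move=> v; rewrite S_eq; split.
  by move=> [k Fk ->]; exists (fun _ => k) => //; rewrite /lcomb big_ord1.
by move=> [c Fc ->]; exists (c 0%N); rewrite /lcomb ?big_ord1.
Qed.

Lemma fbasis_cat s1 s2 (U1 U2 : {vspace V}) :
  fbasis s1 (fun v => v \in U1) -> fbasis s2 (fun v => v \in U2) ->
  directv (U1 + U2) -> fbasis (s1 ++ s2) (fun v => v \in (U1 + U2)%VS).
Proof.
move=> [free1 span1] [free2 span2] dirU.
have mem1 c : fixed_coefs c -> lcomb c s1 \in U1 by move=> Fc; apply/span1; exists c.
have mem2 c : fixed_coefs c -> lcomb c s2 \in U2 by move=> Fc; apply/span2; exists c.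
split.
  move=> c Fc; rewrite lcomb_cat => sum0 i; rewrite size_cat => lt_i.
  have Fc2 : fixed_coefs (fun i => c (size s1 + i)%N) by move=> k; apply: Fc.
  have [sum1 sum2] := directv_add_uniq dirU (mem1 c Fc) (mem0v U1) (mem2 _ Fc2)
    (mem0v U2) (etrans sum0 (esym (addr0 0))).
  have [lt_i1|ge_i1] := ltnP i (size s1); first exact: (free1 c Fc sum1).
  rewrite -(subnKC ge_i1); apply: (free2 _ Fc2 sum2).
  by rewrite -(ltn_add2l (size s1)) subnKC.
move=> v; split.
  move=> /memv_addP [a aU [b bU ->]].
  have [ca Fca ->] := (span1 a).1 aU; have [cb Fcb ->] := (span2 b).1 bU.
  exists (fun i => if (i < size s1)%N then ca i else cb (i - size s1)%N).
    by move=> i; case: ifP.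
  rewrite lcomb_cat; congr (_ + _); apply: eq_bigr => i _.
    by rewrite ltn_ord.
  by rewrite ltnNge leq_addr /= addKn.
by move=> [c Fc ->]; rewrite lcomb_cat memv_add ?mem1 ?mem2.
Qed.

Lemma fbasis_image s (U : {vspace V}) (g : V -> V) :
  {in U &, forall x y, g (x + y) = g x + g y} ->
  (forall c x, fixed c -> x \in U -> g (c *: x) = c *: g x) ->
  {in U &, injective g} ->
  fbasis s (fun v => v \in U) ->
  fbasis (map g s) (fun y => exists2 x, x \in U & y = g x).
Proof.
move=> gD gZ g_inj [free_s span_s].
have sU i : (i < size s)%N -> s`_i \in U by move=> lt_i; apply/span_s/fcomb_nth.
have g0 : g 0 = 0.
  by apply: (addrI (g 0)); rewrite -gD ?mem0v // !addr0.
have g_lcomb c : fixed_coefs c ->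
    lcomb c s \in U /\ g (lcomb c s) = lcomb c (map g s).
  move=> Fc; rewrite /lcomb size_map.
  apply: (big_ind2 (fun a b => a \in U /\ g a = b)).
  - by rewrite g0 mem0v.
  - by move=> a1 b1 a2 b2 [U1 <-] [U2 <-]; rewrite memvD ?gD.
  - by move=> i _; rewrite (nth_map 0) // memvZ ?gZ ?sU.
split.
  move=> c Fc; rewrite size_map -(g_lcomb c Fc).2 -g0 => /g_inj.
  by move=> /(_ (g_lcomb c Fc).1 (mem0v U)) /(free_s c Fc).
move=> y; split.
  by move=> [x /span_s [c Fc ->] ->]; exists c => //; rewrite (g_lcomb c Fc).2.
by move=> [c /g_lcomb [inU <-] ->]; exists (lcomb c s).
Qed.

End FixedBases.
Arguments lcomb {L V} c s.
Arguments fixed_coefs {L} sigma c.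
Arguments fcomb {L} sigma {V} s v.
Arguments ffree {L} sigma {V} s.
Arguments fbasis {L} sigma {V} s S.
Arguments ffree_uniq {L sigma V s}.
Arguments ffree_cons {L sigma V s v}.
Arguments fbasis_ext {L sigma V s S S'}.
Arguments fbasis_single {L sigma V x S}.
Arguments fbasis_image {L sigma V s U g}.

Section ScalarExtension.
Variables (L : fieldType) (sigma : {rmorphism L -> L}) (V : vectType L).
Variable b : seq L^o.
Hypothesis basis_b : fbasis sigma b (fun _ => True).

Lemma lcomb_scale (c : nat -> L) (x : V) :
  (lcomb c b : L) *: x = lcomb c [seq a *: x | a <- b].
Proof.
rewrite /lcomb size_map scaler_suml; apply: eq_bigr => i _.
by rewrite (nth_map 0) // -scalerA.
Qed.

Lemma fbasis_line (x : V) :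
  x != 0 -> fbasis sigma [seq a *: x | a <- b] (fun v => v \in <[x]>%VS).
Proof.
have [free_b span_b] := basis_b; move=> x0; split.
  move=> c Fc; rewrite -lcomb_scale size_map => /eqP.
  by rewrite scaler_eq0 (negbTE x0) orbF => /eqP /(free_b c Fc).
move=> v; split.
  by move=> /vlineP [k ->]; have [c Fc ->] := (span_b k).1 I; exists c;
    rewrite -?lcomb_scale.
by move=> [c _ ->]; rewrite -lcomb_scale memvZ ?memv_line.
Qed.

Definition fscale (X : seq V) : seq V :=
  flatten [seq [seq a *: x | a <- b] | x <- X].

Lemma size_fscale X : size (fscale X) = (size b * size X)%N.
Proof. by elim: X => [|x X IH] /=; rewrite ?muln0 // size_cat size_map IH mulnS. Qed.

Lemma fbasis_span X : free X -> fbasis sigma (fscale X) (fun v => v \in <<X>>%VS).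
Proof.
elim: X => [|x X IH].
  move=> _; rewrite span_nil; split; first by move=> c _ _ i.
  move=> v; rewrite memv0; split; last by move=> [c _ ->]; rewrite /lcomb big_ord0.
  move/eqP->; exists (fun _ => 0); last by rewrite /lcomb big_ord0.
  by move=> i; apply: fixed0.
rewrite free_cons => /andP [x_notin free_X].
have x0 : x != 0 by apply: contraNneq x_notin => ->; rewrite mem0v.
rewrite span_cons; apply: fbasis_cat; [exact: fbasis_line | exact: IH |].
apply/directv_addP/eqP; rewrite -subv0; apply/subvP => y.
move=> /memv_capP [/vlineP [k ->] kx_in]; rewrite memv0.
have [->|k0] := eqVneq k 0; first by rewrite scale0r.
by exfalso; move/negP: x_notin; apply; rewrite -[x](scalerK k0) memvZ.
Qed.

End ScalarExtension.
Arguments fbasis_line {L sigma V b} basis_b {x}.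
Arguments fbasis_span {L sigma V b} basis_b {X}.

Section FiniteFixedBasis.
Variables (L : finFieldType) (sigma : {rmorphism L -> L}).

(* Grow an F-free family greedily; having no repetitions it stays within L. *)
Lemma exists_fbasis : exists b : seq L^o, fbasis sigma b (fun _ => True).
Proof.
suff grow k (b : seq L^o) : ffree sigma b -> (#|L| < size b + k)%N ->
    exists b : seq L^o, fbasis sigma b (fun _ => True).
  by apply: (grow #|L|.+1 [::]) => // c _ _ [].
elim: k b => [|k IH] b free_b.
  rewrite addn0 => lt_size; exfalso.
  have := max_card (mem (b : seq L)); rewrite (card_uniqP (ffree_uniq free_b)).
  by rewrite leqNgt lt_size.
move=> lt_size; have [span_b|] := classic (forall x, fcomb sigma b x).
  by exists b; split => // x; split.
move=> /not_all_ex_not [v not_comb]; apply: (IH (v :: b)); first exact: ffree_cons.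
by rewrite /= addSnnS.
Qed.

Lemma card_fbasis (b : seq L^o) :
  fbasis sigma b (fun _ => True) -> #|L| = (#|[pred x : L | fixed sigma x]| ^ size b)%N.
Proof.
move=> [free_b span_b].
pose F := {x : L | fixed sigma x}.
pose coords (c : {ffun 'I_(size b) -> F}) (i : nat) : L :=
  if insub i is Some k then val (c k) else 0.
have Fcoords c : fixed_coefs sigma (coords c).
  by move=> i; rewrite /coords; case: insub => [k|]; [apply: valP | apply: fixed0].
pose expand c : L := lcomb (coords c) b.
have expand_inj : injective expand.
  move=> c1 c2 /eqP; rewrite -subr_eq0 /lcomb -sumrB => /eqP sum0.
  apply/ffunP => k; apply/val_inj/eqP; rewrite -subr_eq0; apply/eqP.
  pose d i := coords c1 i - coords c2 i.
  have Fd : fixed_coefs sigma d by move=> i; apply/fixedD/fixedN; apply: Fcoords.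
  have := free_b d Fd _ k (ltn_ord k).
  rewrite /d /coords valK; apply; rewrite /lcomb -[RHS]sum0.
  by apply: eq_bigr => i _; rewrite scalerBl.
have onto : [set: L] = expand @: [set: {ffun 'I_(size b) -> F}].
  apply/setP => x; rewrite !inE; symmetry; apply/imsetP.
  have [c Fc ->] := (span_b x).1 I.
  exists [ffun k : 'I_(size b) => (exist _ (c k) (Fc k) : F)] => //.
  by rewrite /lcomb; apply: eq_bigr => k _; rewrite /coords valK ffunE.
by rewrite -cardsT onto card_imset // cardsT card_ffun card_sig card_ord.
Qed.

End FiniteFixedBasis.

Lemma fbasis_Fq_dim (L : finFieldType) (sigma : {rmorphism L -> L}) (q N : nat)
    (s : seq 'rV[L]_N) (S : {set 'rV[L]_N}) :
  [set x | sigma x == x] = Fq q -> fbasis sigma s (fun v => v \in S) ->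
  Fq_dim q S (size s).
Proof.
move=> fixE [free_s span_s].
have fixedE x : fixed sigma x = (x \in Fq q) by rewrite -fixE inE.
have nth_fixed (c : seq L) : all (mem (Fq q)) c -> fixed_coefs sigma (nth 0 c).
  move=> /allP Fc i; have [lt_i|ge_i] := ltnP i (size c).
    by rewrite fixedE; apply: Fc; rewrite mem_nth.
  by rewrite nth_default //; apply: fixed0.
exists s; split => //.
- apply/allP => v /(nthP 0) [i lt_i <-].
  by apply/span_s/fcomb_nth.
- move=> c size_c Fc sum0 i; have [lt_i|ge_i] := ltnP i (size s).
    exact: (free_s _ (nth_fixed c Fc) sum0).
  by rewrite nth_default // size_c.
move=> v; split.
  move=> /span_s [c Fc ->]; exists (mkseq c (size s)); split.
  + by rewrite size_mkseq.
  + by apply/allP => x /mapP [i _ ->]; rewrite -fixedE.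
  + by apply: eq_bigr => i _; rewrite nth_mkseq.
by move=> [c [_ Fc ->]]; apply/span_s; exists (nth 0 c); first exact: nth_fixed.
Qed.
Arguments fbasis_Fq_dim {L sigma q N s S}.

(* The subfield F_q of a field with q^t elements consists of the roots of
   X^q - X, and there are exactly q of them since X^q - X divides X^(q^t) - X. *)
Lemma card_Fq (L : finFieldType) (q t : nat) :
  #|L| = (q ^ t)%N -> (0 < t)%N -> (1 < q)%N -> #|Fq q : {set L}| = q.
Proof.
move=> cardL t_gt0 q_gt1.
pose P : {poly L} := 'X^q - 'X.
have P_dvd : P %| \prod_(x <- enum L) ('X - x%:P).
  rewrite big_enum /= -finField_genPoly cardL.
  have -> : P = ('X^(q.-1) - 1) * 'X by rewrite /P mulrBl mul1r -exprSr prednK // ltnW.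
  have -> : ('X^(q ^ t) - 'X : {poly L}) =
      (('X^(q.-1)) ^+ (\sum_(i < t) q ^ i) - 1) * 'X.
    by rewrite mulrBl mul1r -exprM -predn_exp -exprSr prednK // expn_gt0 ltnW.
  by rewrite (subrX1 ('X^(q.-1))) mulrAC dvdp_mulIl.
have [m Hm] := dvdp_prod_XsubC P_dvd.
have sizeP : size P = q.+1.
  by rewrite /P size_polyDl size_polyXn // size_polyN size_polyX ltnS.
have size_roots : size (mask m (enum L)) = q.
  by have := eqp_size Hm; rewrite sizeP size_prod_XsubC => -[].
rewrite -{2}size_roots -(card_uniqP (mask_uniq (enum_uniq L) m)).
apply: eq_card => x; rewrite inE -root_prod_XsubC -(eqp_root Hm).
by rewrite /root /P !hornerE subr_eq0.
Qed.

Section FixedFieldFq.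
Variables (L : finFieldType) (q t : nat) (sigma : {rmorphism L -> L}).
Hypotheses (t_gt0 : (0 < t)%N) (cardL : #|L| = (q ^ t)%N)
  (fixE : [set x : L | sigma x == x] = Fq q).

(* L has at least two elements, so q > 1. *)
Lemma q_gt1 : (1 < q)%N.
Proof.
have : (2 <= #|L|)%N.
  by have := max_card (mem [set (0 : L); 1]); rewrite cards2 eq_sym oner_neq0.
by rewrite cardL; case: q => [|[|q']] //; rewrite ?exp0n ?exp1n // -lt0n.
Qed.

Lemma card_fixed : #|[pred x : L | fixed sigma x]| = q.
Proof.
rewrite -(@card_Fq L q t cardL t_gt0 q_gt1) -fixE.
by apply: eq_card => x; rewrite !inE.
Qed.

(* An F-basis of L has t elements, since #|L| = q^t = q^(size b). *)
Lemma exists_fbasis_t :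
  exists2 b : seq L^o, fbasis sigma b (fun _ => True) & size b = t.
Proof.
have [b basis_b] := @exists_fbasis L sigma; exists b => //.
move: (@card_fbasis L sigma b basis_b); rewrite card_fixed cardL.
by move/eqP; rewrite eqn_exp2l ?q_gt1 // => /eqP.
Qed.

(* For t > 1 the fixed field is proper, so sigma moves some element. *)
Lemma exists_nonfixed : (1 < t)%N -> exists k : L, sigma k != k.
Proof.
move=> t_gt1; apply/existsP; apply: contraTT t_gt1.
rewrite negb_exists => /forallP all_fixed.
have : #|[pred x : L | fixed sigma x]| = #|L|.
  by apply: eq_card => x; rewrite inE /fixed -[_ == _]negbK all_fixed.
rewrite card_fixed cardL => /eqP; rewrite -{1}(expn1 q) eqn_exp2l ?q_gt1 //.
by move/eqP <-.
Qed.

End FixedFieldFq.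
Arguments q_gt1 {L q t}.
Arguments exists_fbasis_t {L q t sigma}.
Arguments exists_nonfixed {L q t sigma}.

(* The points of PG(U) as the classes of proportional nonzero vectors of U,
   each consisting of #|L| - 1 vectors. *)
Section ProjectivePoints.
Variables (L : finFieldType) (N : nat) (U : {vspace 'rV[L]_N}).
Local Notation V := 'rV[L]_N.

Definition nonzero_vectors : {set V} := vset U :\ 0.

Definition point_class (x : V) : {set V} :=
  [set y in nonzero_vectors | <[x]>%VS == <[y]>%VS].

(* The points of PG(U); by definition of preim_partition these are the
   classes point_class x for x in U \ {0}. *)
Definition points : {set {set V}} :=
  preim_partition (fun v : V => <[v]>%VS) nonzero_vectors.

Lemma mem_nonzero x : (x \in nonzero_vectors) = (x \in U) && (x != 0).
Proof. by rewrite !inE andbC. Qed.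


Lemma card_point_class x : x \in nonzero_vectors -> #|point_class x| = #|L|.-1.
Proof.
rewrite mem_nonzero => /andP [xU x0].
have scale_inj : injective (fun k : L => k *: x).
  move=> a b /eqP; rewrite -subr_eq0 -scalerBl scaler_eq0 (negbTE x0) orbF.
  by rewrite subr_eq0 => /eqP.
rewrite -(cardsC1 (0 : L)) -(card_imset _ scale_inj); apply: eq_card => y.
rewrite inE; apply/andP/imsetP => [[] | [k]].
  rewrite mem_nonzero => /andP [_ y0] /(vline_eqP x0 y0) [k k0 ->].
  by exists k; rewrite ?inE.
rewrite in_setC1 => k0 ->; have kx0 : k *: x != 0 by rewrite scaler_eq0 negb_or k0.
by rewrite mem_nonzero memvZ // kx0; split => //; apply/vline_eqP => //; exists k.
Qed.

Lemma card_nonzero : #|nonzero_vectors| = (#|L| ^ \dim U).-1.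
Proof.
have := cardsD1 (0 : V) (vset U); rewrite inE mem0v add1n.
by rewrite [in LHS]/vset cardsE card_vspace => ->.
Qed.

Lemma card_points : #|nonzero_vectors| = (#|points| * #|L|.-1)%N.
Proof.
apply: card_uniform_partition; last exact: preim_partitionP.
by move=> A /imsetP [x xD ->]; apply: card_point_class.
Qed.

Definition point_rep (A : {set V}) : V := odflt 0 [pick x in A].

Lemma point_rep_mem A : A \in points -> point_rep A \in A.
Proof.
move=> /imsetP [x xD ->]; rewrite /point_rep; case: pickP => [y //|/(_ x)].
by rewrite inE xD eqxx.
Qed.

Lemma point_repP A : A \in points ->
  [/\ point_rep A \in U, point_rep A != 0 & A = point_class (point_rep A)].
Proof.
move=> A_point; have := point_rep_mem A A_point; case/imsetP: A_point => x _ ->.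
rewrite inE mem_nonzero => /andP [/andP [-> ->] /eqP eq_line]; split => //.
by rewrite [in RHS]/point_class -eq_line.
Qed.

End ProjectivePoints.
Arguments nonzero_vectors {L N} U.
Arguments point_class {L N} U x.
Arguments points {L N} U.
Arguments mem_nonzero {L N U x}.
Arguments card_nonzero {L N} U.
Arguments card_points {L N} U.
Arguments point_rep {L N} A.
Arguments point_rep_mem {L N U A}.
Arguments point_repP {L N U A}.

Section GraphOfSemilinearMap.
Variables (L : finFieldType) (q t n N : nat) (sigma : {rmorphism L -> L}).
Variables (U1 U2 : {vspace 'rV[L]_N}) (f : 'rV[L]_N -> 'rV[L]_N) (rho : L).
Local Notation V := 'rV[L]_N.
Hypotheses (n_gt1 : (1 < n)%N) (t_gt1 : (1 < t)%N) (cardL : #|L| = (q ^ t)%N)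
  (sigma_bij : bijective sigma) (fixE : [set x : L | sigma x == x] = Fq q)
  (dimU1 : \dim U1 = n) (dimU2 : \dim U2 = n) (dirU : directv (U1 + U2)%VS)
  (fD : {in U1 &, forall u v, f (u + v) = f u + f v})
  (fZ : forall (a : L) u, u \in U1 -> f (a *: u) = sigma a *: f u)
  (fU2 : forall u, u \in U1 -> f u \in U2)
  (f_inj : {in U1 &, injective f})
  (f_onto : forall w, w \in U2 -> exists2 u, u \in U1 & f u = w)
  (rho_neq0 : rho != 0).

Lemma f0 : f 0 = 0.
Proof. by rewrite -(scale0r 0) fZ ?mem0v // rmorph0 !scale0r. Qed.

Lemma f_neq0 u : u \in U1 -> u != 0 -> f u != 0.
Proof.
move=> uU1; apply: contraNneq => fu0; apply/eqP/f_inj; rewrite ?mem0v //.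
by rewrite fu0 f0.
Qed.

Lemma cap12 : (U1 :&: U2 = 0)%VS.
Proof. exact/directv_addP. Qed.

Lemma mem12 y : y \in U1 -> y \in U2 -> y = 0.
Proof. by move=> yU1 yU2; apply/eqP; rewrite -memv0 -cap12 memv_cap yU1 yU2. Qed.

(* Some vector of U1 lies outside any given line, since dim U1 >= 2. *)
Lemma exists_off_line u : exists2 v, v \in U1 & v \notin <[u]>%VS.
Proof.
apply/subvPn/negP => /dimvS; rewrite dim_vline dimU1 => le_n.
by have := leq_trans n_gt1 (leq_trans le_n (leq_b1 _)).
Qed.

(* f preserves independence of pairs, because sigma is onto. *)
Lemma f_off_line u v : u \in U1 -> v \in U1 -> v \notin <[u]>%VS ->
  f v \notin <[f u]>%VS.
Proof.
move=> uU1 vU1; apply: contra => /vlineP [k fv_eq].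
have [sigma_inv _ sigmaK] := sigma_bij.
have kuU1 : sigma_inv k *: u \in U1 by rewrite memvZ.
have -> : v = sigma_inv k *: u by apply: f_inj; rewrite // fZ // sigmaK.
by rewrite memvZ ?memv_line.
Qed.

Definition gamma (u : V) : V := u + rho *: f u.

Definition W : {set V} := [set gamma u | u in vset U1].

Lemma memW w : w \in W <-> exists2 u, u \in U1 & w = gamma u.
Proof.
split; first by move=> /imsetP [u]; rewrite inE => uU1 ->; exists u.
by move=> [u uU1 ->]; apply/imsetP; exists u; rewrite ?inE.
Qed.

Lemma gamma0 : gamma 0 = 0.
Proof. by rewrite /gamma f0 scaler0 addr0. Qed.

Lemma gammaD : {in U1 &, forall u v, gamma (u + v) = gamma u + gamma v}.
Proof. by move=> u v uU1 vU1; rewrite /gamma fD // scalerDr addrACA. Qed.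

Lemma gammaZ c u : fixed sigma c -> u \in U1 -> gamma (c *: u) = c *: gamma u.
Proof. by move=> /eqP Fc uU1; rewrite /gamma fZ // Fc scalerDr !scalerA mulrC. Qed.

(* gamma is injective: the U1-component of gamma u is u. *)
Lemma gamma_decomp u a b : u \in U1 -> a \in U1 -> b \in U2 ->
  gamma u = a + b -> u = a /\ rho *: f u = b.
Proof. by move=> uU1 aU1 bU2; apply: (directv_add_uniq dirU); rewrite ?memvZ ?fU2. Qed.

Lemma gamma_inj : {in U1 &, injective gamma}.
Proof.
by move=> u v uU1 vU1 /gamma_decomp [] //; rewrite ?memvZ ?fU2.
Qed.

(* W is an F_q-subspace of dimension tn: gamma maps an F_q-basis of U1 onto one. *)
Lemma W_dim : Fq_dim q W (t * n)%N.
Proof.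
have [b basis_b size_b] := exists_fbasis_t (ltnW t_gt1) cardL fixE.
have basisU1 := vbasisP U1.
have := fbasis_span basis_b (basis_free basisU1); rewrite (span_basis basisU1).
move=> /(fbasis_image gammaD gammaZ gamma_inj).
move=> /(fbasis_ext (fun w => iff_sym (memW w))).
by move=> /(fbasis_Fq_dim fixE); rewrite size_map size_fscale size_tuple size_b dimU1.
Qed.

Lemma W_on_line u w : u \in U1 -> u != 0 ->
  w \in W -> w \in <[gamma u]>%VS -> exists2 k, fixed sigma k & w = k *: gamma u.
Proof.
move=> uU1 u0 /memW [x xU1 ->] /vlineP [k eq_k]; exists k => //.
have [x_eq fx_eq] : x = k *: u /\ rho *: f x = k *: (rho *: f u).
  by apply: gamma_decomp; rewrite ?memvZ ?fU2 // eq_k scalerDr.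
move: fx_eq; rewrite x_eq fZ // !scalerA => /eqP.
rewrite -subr_eq0 -scalerBl scaler_eq0 (negbTE (f_neq0 u uU1 u0)) orbF.
by rewrite [k * _]mulrC -mulrBr mulf_eq0 (negbTE rho_neq0) subr_eq0.
Qed.

Lemma W_scattered : scattered q W.
Proof.
move=> w /memW [u uU1 ->] gu0.
have u0 : u != 0 by apply: contraNneq gu0 => ->; rewrite gamma0.
rewrite /weight -[1%N]/(size [:: gamma u]); apply: (fbasis_Fq_dim fixE).
apply: fbasis_single => // v; rewrite !inE; split.
  by move=> /andP [vW v_line]; apply: W_on_line.
move=> [k Fk ->]; rewrite memvZ ?memv_line // andbT.
by apply/memW; exists (k *: u); rewrite ?memvZ ?gammaZ.
Qed.

Definition sline (u : V) : {vspace V} := (<[u]> + <[f u]>)%VS.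

Lemma mem_slineP u y :
  reflect (exists a b, y = a *: u + b *: f u) (y \in sline u).
Proof.
apply: (iffP memv_addP) => [[y1 /vlineP [a ->] [y2 /vlineP [b ->] ->]]|].
  by exists a, b.
by move=> [a [b ->]]; exists (a *: u); rewrite ?memvZ ?memv_line //; exists (b *: f u);
  rewrite ?memvZ ?memv_line.
Qed.

(* For u != 0, <u, f(u)> is a line: u and f(u) lie in U1 and U2. *)
Lemma sline_dim u : u \in U1 -> u != 0 -> \dim (sline u) = 2%N.
Proof.
move=> uU1 u0; have := dimv_sum_cap <[u]> <[f u]>.
have -> : (<[u]> :&: <[f u]> = 0)%VS.
  apply/eqP; rewrite -subv0; apply/subvP => y.
  move=> /memv_capP [/vlineP [a ->] /vlineP [b fu_eq]].
  rewrite memv0; apply/eqP/mem12; first by rewrite memvZ.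
  by rewrite fu_eq memvZ ?fU2.
by rewrite dimv0 addn0 => ->; rewrite !dim_vline u0 f_neq0.
Qed.

Lemma sline_scale u k : u \in U1 -> k != 0 -> sline (k *: u) = sline u.
Proof. by move=> uU1 k0; rewrite /sline fZ // !vline_scale // fmorph_eq0. Qed.

Lemma sline_cap u v : u \in U1 -> v \in U1 -> u != 0 -> v \notin <[u]>%VS ->
  (sline u :&: sline v = 0)%VS.
Proof.
move=> uU1 vU1 u0 v_notin; apply/eqP; rewrite -subv0; apply/subvP => y.
move=> /memv_capP [/mem_slineP [a [b ->]] /mem_slineP [c [d eq_y]]].
have [eq_U1 eq_U2] := directv_add_uniq dirU (memvZ a uU1) (memvZ c vU1)
  (memvZ b (fU2 _ uU1)) (memvZ d (fU2 _ vU1)) eq_y.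
have [-> _] : a = 0 /\ 0 = c.
  by apply: (coord2_uniq u0 v_notin); rewrite !scale0r addr0 add0r.
have [-> _] : b = 0 /\ 0 = d.
  apply: (coord2_uniq (f_neq0 u uU1 u0) (f_off_line _ _ uU1 vU1 v_notin)).
  by rewrite !scale0r addr0 add0r.
by rewrite !scale0r addr0 memv0.
Qed.

(* Each such line has weight t in L_W: it meets W in gamma(<u>), which has
   the F_q-basis gamma(b u) for an F_q-basis b of L. *)
Lemma sline_weight u : u \in U1 -> u != 0 -> weight q W (sline u) t.
Proof.
move=> uU1 u0; have [b basis_b size_b] := exists_fbasis_t (ltnW t_gt1) cardL fixE.
have line_sub : {subset <[u]>%VS <= U1} by apply/subvP; rewrite -memvE.
have gZ c x : fixed sigma c -> x \in <[u]>%VS -> gamma (c *: x) = c *: gamma x.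
  by move=> Fc /line_sub; apply: gammaZ.
have := fbasis_image (sub_in2 line_sub gammaD) gZ (sub_in2 line_sub gamma_inj)
  (fbasis_line basis_b u0).
move=> /(fbasis_ext (S' := fun y => y \in W :&: vset (sline u))) basis_Wu.
rewrite /weight -size_b -(size_map (fun a => a *: u)) -(size_map gamma).
apply: (fbasis_Fq_dim fixE); apply: basis_Wu => y; rewrite !inE; split.
  move=> [x /vlineP [k ->] ->]; apply/andP; split.
    by apply/memW; exists (k *: u); rewrite ?memvZ.
  by apply/mem_slineP; exists k, (rho * sigma k); rewrite /gamma fZ // scalerA.
move=> /andP [/memW [x xU1 ->] /mem_slineP [a [c eq_x]]]; exists x => //.
have [-> _] := gamma_decomp _ _ _ xU1 (memvZ a uU1) (memvZ c (fU2 _ uU1)) eq_x.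
by rewrite memvZ ?memv_line.
Qed.

(* A scalar relation a k = b sigma(k) holding for all k forces a = b = 0,
   since sigma is not the identity. *)
Lemma sigma_rel0 a b : (forall k, a * k = b * sigma k) -> a = 0 /\ b = 0.
Proof.
move=> rel; have eq_ab : a = b by have := rel 1; rewrite rmorph1 !mulr1.
have [k sigma_k] := exists_nonfixed (ltnW t_gt1) cardL fixE t_gt1.
have := rel k; rewrite eq_ab => /eqP; rewrite -subr_eq0 -mulrBr mulf_eq0.
by rewrite subr_eq0 [k == _]eq_sym (negbTE sigma_k) orbF => /eqP.
Qed.

Section Transversals.
Variable T : {vspace V}.
Hypotheses (dimT : \dim T = n)
  (T_meets : forall u, u \in U1 -> u != 0 -> (T :&: sline u)%VS != 0%VS).

Lemma T_point u : u \in U1 -> u != 0 ->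
  exists a b, a *: u + b *: f u \in T /\ a *: u + b *: f u != 0.
Proof.
move=> uU1 u0; have := T_meets _ uU1 u0; rewrite -vpick0 => pick0.
have /memv_capP [yT /mem_slineP [a [b y_eq]]] := memv_pick (T :&: sline u)%VS.
by exists a, b; rewrite -y_eq.
Qed.

(* If T misses U2 then T = U1: T meets each line in some u + c_u f(u), and
   comparing u, v and u + k v gives c_v k = c_u sigma(k), so c_u = 0. *)
Lemma T_eq_U1 : (T :&: U2 = 0)%VS -> T = U1.
Proof.
move=> capTU2.
have normal u : u \in U1 -> u != 0 -> exists c, u + c *: f u \in T.
  move=> uU1 u0; have [a [b [abT ab0]]] := T_point u uU1 u0.
  have [a0|a0] := eqVneq a 0; last first.
    exists (a^-1 * b); move: (memvZ a^-1 abT).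
    by rewrite scalerDr !scalerA mulVf ?scale1r.
  move: ab0 abT; rewrite a0 scale0r add0r => /negP bfu0 bfuT; exfalso; apply: bfu0.
  by rewrite -memv0 -capTU2 memv_cap bfuT memvZ ?fU2.
apply: eq_vspace_dim; first by rewrite dimT dimU1.
move=> u uU1 u0; have [v vU1 v_notin] := exists_off_line u.
have [cu uT] := normal u uU1 u0.
have v0 : v != 0 by apply: contraNneq v_notin => ->; rewrite mem0v.
have [cv vT] := normal v vU1 v0.
suff [_ cu0] : cv = 0 /\ cu = 0 by rewrite cu0 scale0r addr0 in uT.
apply: sigma_rel0 => k; have wU1 : u + k *: v \in U1 by rewrite memvD ?memvZ.
have [cw wT] := normal _ wU1 (off_line_neq0 k u0 v_notin).
have uvT : (u + k *: v) + (cu *: f u + (k * cv) *: f v) \in T.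
  by move: (memvD uT (memvZ k vT)); rewrite scalerDr scalerA addrACA.
move: wT; rewrite fD ?memvZ // fZ // scalerDr scalerA => wT.
have := cap0_translate capTU2 uvT wT.
rewrite !memvD ?memvZ ?fU2 // => /(_ isT isT) /(coord2_uniq (f_neq0 u uU1 u0)).
by case/(_ (f_off_line _ _ uU1 vU1 v_notin)) => -> <-; exact: mulrC.
Qed.

(* Symmetrically, if T misses U1 then T = U2: T meets each line in some
   f(u) + d_u u, and now d_u k = d_v sigma(k) for all k, so d_u = 0. *)
Lemma T_eq_U2 : (T :&: U1 = 0)%VS -> T = U2.
Proof.
move=> capTU1.
have normal u : u \in U1 -> u != 0 -> exists d, f u + d *: u \in T.
  move=> uU1 u0; have [a [b [abT ab0]]] := T_point u uU1 u0.
  have [b0|b0] := eqVneq b 0; last first.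
    exists (b^-1 * a); move: (memvZ b^-1 abT).
    by rewrite addrC scalerDr !scalerA mulVf ?scale1r.
  move: ab0 abT; rewrite b0 scale0r addr0 => /negP au0 auT; exfalso; apply: au0.
  by rewrite -memv0 -capTU1 memv_cap auT memvZ.
apply: eq_vspace_dim; first by rewrite dimT dimU2.
move=> _ /f_onto [u uU1 <-] fu0.
have u0 : u != 0 by apply: contraNneq fu0 => ->; rewrite f0.
have [v vU1 v_notin] := exists_off_line u.
have [du uT] := normal u uU1 u0.
have v0 : v != 0 by apply: contraNneq v_notin => ->; rewrite mem0v.
have [dv vT] := normal v vU1 v0.
suff [du0 _] : du = 0 /\ dv = 0 by rewrite du0 scale0r addr0 in uT.
apply: sigma_rel0 => k; have wU1 : u + k *: v \in U1 by rewrite memvD ?memvZ.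
have [dw wT] := normal _ wU1 (off_line_neq0 k u0 v_notin).
have uvT : (f u + sigma k *: f v) + (du *: u + (sigma k * dv) *: v) \in T.
  by move: (memvD uT (memvZ (sigma k) vT)); rewrite scalerDr scalerA addrACA.
move: wT; rewrite fD ?memvZ // fZ // scalerDr scalerA => wT.
have := cap0_translate capTU1 uvT wT.
rewrite !memvD ?memvZ // => /(_ isT isT) /(coord2_uniq u0 v_notin).
by case=> -> <-; exact: mulrC.
Qed.

(* T cannot meet both U1 and U2: each u in U1 satisfies u in T + U2 or
   f(u) in T, and neither alternative can hold for all of U1, nor for a sum
   u1 + u2 of witnesses of their failure. *)
Lemma T_not_meets_both : (T :&: U1 != 0)%VS -> (T :&: U2 != 0)%VS -> False.
Proof.
move=> capTU1 capTU2.
have alt u : u \in U1 -> u \in (T + U2)%VS \/ f u \in T.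
  move=> uU1; have [->|u0] := eqVneq u 0; first by left; rewrite mem0v.
  have [a [b [abT ab0]]] := T_point u uU1 u0.
  have [a0|a0] := eqVneq a 0.
    right; move: ab0 abT; rewrite a0 scale0r add0r => bfu0.
    have b0 : b != 0 by apply: contraNneq bfu0 => ->; rewrite scale0r.
    by move/(memvZ b^-1); rewrite scalerA mulVf ?scale1r.
  left; have -> : u = a^-1 *: (a *: u + b *: f u) + (- (a^-1 * b)) *: f u.
    by rewrite scalerDr !scalerA mulVf // scale1r scaleNr addrK.
  by apply: memv_add; rewrite memvZ ?fU2.
have [u1 u1U1 u1_notin] : exists2 u1, u1 \in U1 & u1 \notin (T + U2)%VS.
  apply/subvPn/negP => /(conj (addvSr T U2)) /andP; rewrite andbC -subv_add.
  move=> /dimvS; have := dimv_sum_cap T U2; have := dimv_sum_cap U1 U2.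
  rewrite cap12 dimv0 dimT dimU1 dimU2; move: capTU2; rewrite -dimv_eq0 -lt0n.
  lia.
have [u2 u2U1 fu2_notin] : exists2 u2, u2 \in U1 & f u2 \notin T.
  have /subvPn [_ /f_onto [u2 u2U1 <-]] : ~~ (U2 <= T)%VS; last by exists u2.
  apply: contra capTU1 => /subvP U2T.
  have -> : T = U2 by apply: eq_vspace_dim => [|w /U2T //]; rewrite dimT dimU2.
  by rewrite capvC cap12.
have fu1T : f u1 \in T by case: (alt _ u1U1) => // /(negP u1_notin).
have u2_in : u2 \in (T + U2)%VS by case: (alt _ u2U1) => // /(negP fu2_notin).
have [sum_in|fsum_in] := alt _ (memvD u1U1 u2U1).
  by move/negP: u1_notin; apply; rewrite -[u1](addrK u2); apply: memvB.
move/negP: fu2_notin; apply; rewrite -[f u2](addKr (f u1)) -fD //.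
by apply: memvD; rewrite ?memvN.
Qed.

Lemma T_char : T = U1 \/ T = U2.
Proof.
have [capTU2|capTU2] := eqVneq (T :&: U2)%VS 0%VS; first by left; apply: T_eq_U1.
have [capTU1|capTU1] := eqVneq (T :&: U1)%VS 0%VS; first by right; apply: T_eq_U2.
by case: (T_not_meets_both capTU1 capTU2).
Qed.

End Transversals.

Lemma card_points_U1 : pr_size q t n = #|points U1|.
Proof.
have L_gt1 : (0 < #|L|.-1)%N.
  have q1 := q_gt1 (ltnW t_gt1) cardL.
  by rewrite cardL -subn1 subn_gt0 -{1}(expn0 q) ltn_exp2l // (ltnW t_gt1).
rewrite /pr_size mulnC expnM -cardL !subn1 -dimU1 -card_nonzero card_points mulnK //.
Qed.

Definition point_of (i : 'I_(pr_size q t n)) : {set V} :=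
  enum_val (cast_ord card_points_U1 i).
Definition rep_of i : V := point_rep (point_of i).
Definition pseudoregulus i : {vspace V} := sline (rep_of i).

Lemma point_ofP i :
  [/\ rep_of i \in U1, rep_of i != 0 & point_of i = point_class U1 (rep_of i)].
Proof. exact: point_repP (enum_valP _). Qed.

Lemma rep_of_line i j : rep_of i \in <[rep_of j]>%VS -> i = j.
Proof.
have [_ repi0 pi_eq] := point_ofP i; have [_ _ pj_eq] := point_ofP j.
move=> /vlineP [k rep_eq].
have k0 : k != 0 by apply: contraNneq repi0 => k0; rewrite rep_eq k0 scale0r.
have : point_of i = point_of j.
  by rewrite pi_eq pj_eq /point_class rep_eq vline_scale.
by move/enum_val_inj/cast_ord_inj.
Qed.

(* Distinct points give distinct lines, since <u, f(u)> meets U1 in <u>. *)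
Lemma pseudoregulus_inj : injective pseudoregulus.
Proof.
move=> i j eq_ij; have [repiU _ _] := point_ofP i; have [repjU _ _] := point_ofP j.
apply: rep_of_line; have : rep_of i \in pseudoregulus j.
  by rewrite -eq_ij; apply/mem_slineP; exists 1, 0; rewrite scale1r scale0r addr0.
move=> /mem_slineP [a [b rep_eq]].
have [-> _] := directv_add_uniq dirU repiU (memvZ a repjU) (mem0v U2)
  (memvZ b (fU2 _ repjU)) (etrans (addr0 _) rep_eq).
by rewrite memvZ ?memv_line.
Qed.

Lemma pseudoregulus_lines l : (exists i, pseudoregulus i = l) <->
  (exists2 u, u \in U1 & u != 0 /\ l = sline u).
Proof.
split=> [[i <-]|[u uU1 [u0 ->]]].
  by have [repU rep0 _] := point_ofP i; exists (rep_of i).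
have uD : u \in nonzero_vectors U1 by rewrite mem_nonzero uU1 u0.
have class_u : point_class U1 u \in points U1 by apply: imset_f.
pose i := cast_ord (esym card_points_U1) (enum_rank_in class_u (point_class U1 u)).
have point_i : point_of i = point_class U1 u.
  by rewrite /point_of cast_ordKV enum_rankK_in.
exists i; have := point_rep_mem (enum_valP (cast_ord card_points_U1 i)).
rewrite -/(point_of i) -/(rep_of i) [in X in _ \in X]point_i inE.
have [_ repi0 _] := point_ofP i.
move=> /andP [_ /(vline_eqP u0 repi0) [k k0 rep_eq]].
by rewrite /pseudoregulus rep_eq sline_scale.
Qed.

(* L_W is disjoint from PG(U1) and from PG(U2): a point gamma(u) of W lies in
   neither, since both its components u and rho f(u) are nonzero. *)
Lemma W_disjoint_U1 : disjoint_from_LU W U1.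
Proof.
move=> _ /memW [u uU1 ->] gu0; rewrite -memvE; apply: contra gu0 => guU1.
have fu0 : rho *: f u = 0.
  apply: mem12; last by rewrite memvZ ?fU2.
  by rewrite -[_ *: _](addKr u); apply: memvD; rewrite ?memvN.
have [->|u0] := eqVneq u 0; first by rewrite gamma0.
by move/eqP: fu0; rewrite scaler_eq0 (negbTE rho_neq0) (negbTE (f_neq0 u uU1 u0)).
Qed.

Lemma W_disjoint_U2 : disjoint_from_LU W U2.
Proof.
move=> _ /memW [u uU1 ->] gu0; rewrite -memvE; apply: contra gu0 => guU2.
have uU2 : u \in U2 by rewrite -[u](addrK (rho *: f u)) memvB ?memvZ ?fU2.
by rewrite (mem12 _ uU1 uU2) gamma0.
Qed.

Lemma pseudoregulus_meets i :
  (U1 :&: pseudoregulus i)%VS != 0%VS /\ (U2 :&: pseudoregulus i)%VS != 0%VS.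
Proof.
have [repU rep0 _] := point_ofP i; split.
  apply: (capv_neq0 repU _ rep0); apply/mem_slineP.
  by exists 1, 0; rewrite scale1r scale0r addr0.
apply: (capv_neq0 (fU2 _ repU) _ (f_neq0 _ repU rep0)); apply/mem_slineP.
by exists 0, 1; rewrite scale1r scale0r add0r.
Qed.

Lemma is_pseudoregulus_lines : is_pseudoregulus q t n W pseudoregulus U1 U2.
Proof.
split.
- by move=> i; have [repU rep0 _] := point_ofP i; apply: sline_dim.
- move=> i j neq_ij.
  have [repiU repi0 _] := point_ofP i; have [repjU _ _] := point_ofP j.
  by apply: sline_cap => //; apply: contra neq_ij => /rep_of_line ->.
- by move=> i; have [repU rep0 _] := point_ofP i; apply: sline_weight.
- apply: contraTneq n_gt1 => eqU12; move: cap12; rewrite eqU12 capvv => U2_0.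
  by rewrite -dimU2 U2_0 dimv0.
move=> T; split=> [[dimT [_ T_meets]] | [->|->]].
- apply: T_char => // u uU1 u0.
  have [|i <-] := (pseudoregulus_lines (sline u)).2; last exact: T_meets.
  by exists u.
- by do !split => //; [exact: W_disjoint_U1 | move=> i; case: (pseudoregulus_meets i)].
by do !split => //; [exact: W_disjoint_U2 | move=> i; case: (pseudoregulus_meets i)].
Qed.

End GraphOfSemilinearMap.
Arguments W_dim {L q t n N sigma U1 U2 f rho}.
Arguments W_scattered {L q N sigma U1 U2 f rho}.
Arguments pseudoregulus {L q t n N U1 f}.
Arguments pseudoregulus_inj {L q t n N U1 U2 f t_gt1 cardL dimU1}.
Arguments pseudoregulus_lines {L q t n N sigma U1 f t_gt1 cardL dimU1}.
Arguments is_pseudoregulus_lines {L q t n N sigma U1 U2 f rho}.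

Theorem theorem3p5 (L : finFieldType) (q t n : nat)
    (sigma : {rmorphism L -> L})
    (U1 U2 : {vspace 'rV[L]_(2 * n)})
    (f : 'rV[L]_(2 * n) -> 'rV[L]_(2 * n)) (rho : L) :
  (2 <= n)%N -> (2 <= t)%N ->
  #|L| = (q ^ t)%N ->
  bijective sigma ->
  [set x : L | sigma x == x] = Fq q ->
  \dim U1 = n -> \dim U2 = n -> directv (U1 + U2)%VS -> (U1 + U2)%VS = fullv ->
  {in U1 &, forall u v, f (u + v) = f u + f v} ->
  (forall (a : L) u, u \in U1 -> f (a *: u) = sigma a *: f u) ->
  (forall u, u \in U1 -> f u \in U2) ->
  {in U1 &, injective f} ->
  (forall w, w \in U2 -> exists2 u, u \in U1 & f u = w) ->
  rho != 0 ->
  let W := [set u + rho *: f u | u in vset U1] in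
  [/\ Fq_dim q W (t * n)%N,
      pseudoregulus_type q t n W &
      exists s : 'I_(pr_size q t n) -> {vspace 'rV[L]_(2 * n)},
        [/\ injective s,
            forall l, (exists i, s i = l) <->
              (exists2 u, u \in U1 & u != 0 /\ l = (<[u]> + <[f u]>)%VS) &
            is_pseudoregulus q t n W s U1 U2]].
Proof.
move=> n_gt1 t_gt1 cardL sigma_bij fixE dimU1 dimU2 dirU _ fD fZ fU2 f_inj f_onto
  rho_neq0 W.
pose s := pseudoregulus (f := f) t_gt1 cardL dimU1.
have W_rank : Fq_dim q W (t * n) := W_dim t_gt1 cardL fixE dimU1 dirU fD fZ fU2.
have W_scat : scattered q W := W_scattered fixE dirU fZ fU2 f_inj rho_neq0.
have s_psr : is_pseudoregulus q t n W s U1 U2 :=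
  is_pseudoregulus_lines n_gt1 t_gt1 cardL sigma_bij fixE dimU1 dimU2 dirU fD fZ fU2
    f_inj f_onto rho_neq0.
split=> //; first by split=> //; exists s, U1, U2.
exists s; split=> //; first exact: pseudoregulus_inj dirU fU2.
exact: pseudoregulus_lines fZ.
Qed.
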